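(* Let $\mathcal{A}=(Q,\delta,I,F)$ be a complete Büchi automaton with $n=|Q|$ and let $\mathcal{B}_S$ be the automaton produced from $\mathcal{A}$ by Schewe's rank-based complementation construction (described in the context). For $x\in\{\mathit{di},\mathit{de},\mathit{di+de}\}$, let $\mathcal{B}_S^{\mathit{sat},x}$ be the saturated variant $\mathcal{B}_S^{\mathit{sat}}$ (described in the context) in which every occurrence of $Q_2$ is replaced by $Q_2^{x}$, where $Q_2^{\mathit{di}}=Q_2\setminus\{(S,O,f,i)\in Q_2\mid\exists p,q\in S: p\preceq_{\mathit{di}}q\wedge f(p)>f(q)\}$, $Q_2^{\mathit{de}}=Q_2\setminus\{(S,O,f,i)\in Q_2\mid\exists p,q\in S: p\preceq_{\mathit{de}}q\wedge f(p)>\lceil f(q)\rceil\}$, $Q_2^{\mathit{di+de}}=Q_2^{\mathit{di}}\cap Q_2^{\mathit{de}}$, and $\lceil x\rceil$ is the smallest even number $\ge x$. Then $\mathcal{L}(\mathcal{B}_S^{\mathit{sat},\mathit{di}})=\mathcal{L}(\mathcal{B}_S^{\mathit{sat},\mathit{de}})=\mathcal{L}(\mathcal{B}_S^{\mathit{sat},\mathit{di+de}})=\mathcal{L}(\mathcal{B}_S)$.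
   Context: Fix a finite nonempty alphabet $\Sigma$. A Büchi automaton is $\mathcal{A}=(Q,\delta,I,F)$ with $\delta:Q\times\Sigma\to2^Q$, complete if $\delta(q,a)\ne\emptyset$ always; $\delta(P,a)=\bigcup_{p\in P}\delta(p,a)$. A run from $q$ on $\alpha=\alpha_0\alpha_1\cdots$ is $\rho$ with $\rho_0=q$, $\rho_{i+1}\in\delta(\rho_i,\alpha_i)$; accepting if some state of $F$ occurs infinitely often; $\mathcal{L}(\mathcal{A})$ is the set of words with an accepting run from an initial state. Simulations: in the game from $(p_0,r_0)$, in round $i$ Spoiler picks $p_i\xrightarrow{\alpha_i}p_{i+1}$ and Duplicator answers $r_i\xrightarrow{\alpha_i}r_{i+1}$; a Duplicator strategy is a map $\sigma$ with $\sigma(r,p\xrightarrow{a}p')\in\delta(r,a)$ (no lookahead). Duplicator wins the direct game if for all $i$, $p_i\in F\Rightarrow r_i\in F$, and the delayed game if for all $i$, $p_i\in F\Rightarrow\exists k\ge i: r_k\in F$. $p\preceq_{\mathit{di}}r$ (resp. $p\preceq_{\mathit{de}}r$) iff Duplicator has a winning strategy in the direct (resp. delayed) game from $(p,r)$. Schewe's construction. A ranking is $f:Q\to\{0,\dots,2n\}$ with $f(q)$ even for $q\in F$; $\mathrm{rank}(f)=\max_q f(q)$. $f$ is $S$-tight if $\mathrm{rank}(f)=r$ is odd, $\{f(s)\mid s\in S\}\supseteq\{1,3,\dots,r\}$ and $\{f(q)\mid q\notin S\}=\{0\}$; $\mathcal{T}$ is the set of $Q$-tight rankings. $\mathcal{B}_S=(Q',\delta',I',F')$: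 $Q'=Q_1\cup Q_2$, $Q_1=2^Q$, $Q_2=\{(S,O,f,i)\in 2^Q\times2^Q\times\mathcal{T}\times\{0,2,\dots,2n-2\}\mid f \text{ is } S\text{-tight},\ O\subseteq S\cap f^{-1}(i)\}$; $I'=\{I\}$; $\delta'=\delta_1\cup\delta_2\cup\delta_3$ with $\delta_1(S,a)=\{\delta(S,a)\}$; $\delta_2(S,a)=\{(S',\emptyset,f,0)\in Q_2\mid S'=\delta(S,a), f\text{ is } S'\text{-tight}\}$; $(S',O',f',i')\in\delta_3((S,O,f,i),a)$ iff $(S',O',f',i')\in Q_2$, $S'=\delta(S,a)$, $f'(q')\le f(q)$ for all $q\in S,q'\in\delta(q,a)$, $\mathrm{rank}(f)=\mathrm{rank}(f')$, $f'$ is $S'$-tight, and either ($O=\emptyset$, $i'=(i+2)\bmod(\mathrm{rank}(f')+1)$, $O'=f'^{-1}(i')$) or ($O\ne\emptyset$, $i'=i$, $O'=\delta(O,a)\cap f'^{-1}(i)$); $F'=\{\emptyset\}\cup\{(S,\emptyset,f,i)\in Q_2\}$. Saturated variant: with $\mathrm{str}(S)=\{q\in Q\mid\exists s\in S:q\preceq_{\mathit{de}}s\}$, $\mathcal{B}_S^{\mathit{sat}}$ has the same $Q'$, $I'$, $F'$ but transitions $\delta_1^{\mathit{sat}}(S,a)=\{\mathrm{str}(\delta(S,a))\}$; $\delta_2^{\mathit{sat}}(S,a)=\{(S',\emptyset,f,0)\in Q_2\mid S'=\mathrm{str}(\delta(S,a))\}$; $(S',O',f',i')\in\delta_3^{\mathit{sat}}((S,O,f,i),a)$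 iff $(S',O',f',i')\in Q_2$, $S'=\mathrm{str}(\delta(S,a))$, $f'(q')\le f(q)$ for all $q\in S,q'\in\delta(q,a)$, $\mathrm{rank}(f)=\mathrm{rank}(f')$, and either ($O=\emptyset$, $i'=(i+2)\bmod(\mathrm{rank}(f')+1)$, $O'=f'^{-1}(i')$) or ($O\ne\emptyset$, $i'=i$, $O'=\delta(O,a)\cap f'^{-1}(i)$). *)

From mathcomp Require Import all_boot.
Set Implicit Arguments. Unset Strict Implicit. Unset Printing Implicit Defensive.

Record buchi (Sigma Q : finType) := Buchi {
  delta : Q -> Sigma -> {set Q};
  init  : {set Q};
  fin   : {set Q} }.

Section Defs.
Variables (Sigma Q : finType) (A : buchi Sigma Q).

Definition complete : Prop := forall q a, delta A q a != set0.

Definition img (P : {set Q}) (a : Sigma) : {set Q} := \bigcup_(p in P) delta A p a.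

Definition lang_gen (St : Type) (ini : St -> Prop) (tr : St -> Sigma -> St -> Prop)
  (acc : St -> Prop) (w : nat -> Sigma) : Prop :=
  exists rho : nat -> St, ini (rho 0) /\ (forall i, tr (rho i) (w i) (rho i.+1))
    /\ (forall N, exists k, N <= k /\ acc (rho k)).

Definition lang (w : nat -> Sigma) : Prop :=
  lang_gen (fun q => q \in init A) (fun q a q' => q' \in delta A q a)
           (fun q => q \in fin A) w.

(* Duplicator strategy: sigma r p a p' = answer of Duplicator at r to p -a-> p'. *)
Definition strategy (sigma : Q -> Q -> Sigma -> Q -> Q) : Prop :=
  forall r p a p', p' \in delta A p a -> sigma r p a p' \in delta A r a.

Definition spoiler_path (p0 : Q) (w : nat -> Sigma) (ps : nat -> Q) : Prop :=
  ps 0 = p0 /\ forall i, ps i.+1 \in delta A (ps i) (w i).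

Fixpoint dup (sigma : Q -> Q -> Sigma -> Q -> Q) (r0 : Q) (w : nat -> Sigma)
  (ps : nat -> Q) (i : nat) : Q :=
  match i with
  | 0 => r0
  | k.+1 => sigma (dup sigma r0 w ps k) (ps k) (w k) (ps k.+1)
  end.

Definition sim_di (p r : Q) : Prop :=
  exists sigma, strategy sigma /\
    forall w ps, spoiler_path p w ps ->
      forall i, ps i \in fin A -> dup sigma r w ps i \in fin A.

Definition sim_de (p r : Q) : Prop :=
  exists sigma, strategy sigma /\
    forall w ps, spoiler_path p w ps ->
      forall i, ps i \in fin A -> exists k, i <= k /\ dup sigma r w ps k \in fin A.

Definition nQ := #|Q|.

Definition ranking (f : Q -> nat) : Prop :=
  (forall q, f q <= 2 * nQ) /\ (forall q, q \in fin A -> ~~ odd (f q)).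

Definition rank (f : Q -> nat) : nat := \max_(q : Q) f q.

Definition tight (S : {set Q}) (f : Q -> nat) : Prop :=
  odd (rank f)
  /\ (forall k, odd k -> k <= rank f -> exists2 s, s \in S & f s = k)
  /\ (forall q, q \notin S -> f q = 0).

Definition Q2 (S O : {set Q}) (f : Q -> nat) (i : nat) : Prop :=
  (ranking f /\ tight setT f) /\ tight S f /\ ~~ odd i /\ i + 2 <= 2 * nQ
  /\ O \subset S /\ (forall q, q \in O -> f q = i).

Definition ceil_even (x : nat) : nat := if odd x then x.+1 else x.

Definition Q2_di (S O : {set Q}) (f : Q -> nat) (i : nat) : Prop :=
  Q2 S O f i /\
  ~ (exists p q, [/\ p \in S, q \in S, sim_di p q & f q < f p]).

Definition Q2_de (S O : {set Q}) (f : Q -> nat) (i : nat) : Prop :=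
  Q2 S O f i /\
  ~ (exists p q, [/\ p \in S, q \in S, sim_de p q & ceil_even (f q) < f p]).

Definition Q2_dide (S O : {set Q}) (f : Q -> nat) (i : nat) : Prop :=
  Q2_di S O f i /\ Q2_de S O f i.

(* States: Q_1 = C1 S, Q_2 = C2 S O f i (membership in Q_2 enforced by the
   transition relation / acceptance condition). *)
Inductive cstate := C1 of {set Q} | C2 of {set Q} & {set Q} & (Q -> nat) & nat.

(* post T S' : S' is the successor macrostate computed from T = delta(S,a):
   S' = T for B_S, S' = str(T) for the saturated variants. *)
Definition post_id (T S' : {set Q}) : Prop := S' = T.
Definition post_str (T S' : {set Q}) : Prop :=
  forall q, q \in S' <-> exists2 s, s \in T & sim_de q s.

Definition ctrans (Q2x : {set Q} -> {set Q} -> (Q -> nat) -> nat -> Prop)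
  (post : {set Q} -> {set Q} -> Prop) (s : cstate) (a : Sigma) (s' : cstate) : Prop :=
  match s, s' with
  | C1 X, C1 X' => post (img X a) X'
  | C1 X, C2 X' Y' f' i' =>
      Q2x X' Y' f' i' /\ post (img X a) X' /\ Y' = set0 /\ i' = 0 /\ tight X' f'
  | C2 X Y f i, C2 X' Y' f' i' =>
      Q2x X' Y' f' i' /\ post (img X a) X'
      /\ (forall q q', q \in X -> q' \in delta A q a -> f' q' <= f q)
      /\ rank f = rank f' /\ tight X' f'
      /\ ((Y = set0 /\ i' = (i + 2) %% (rank f' + 1)
            /\ Y' = [set q in X' | f' q == i'])
          \/ (Y != set0 /\ i' = i /\ Y' = img Y a :&: [set q | f' q == i]))
  | C2 _ _ _ _, C1 _ => False
  end.

Definition cacc (Q2x : {set Q} -> {set Q} -> (Q -> nat) -> nat -> Prop)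
  (s : cstate) : Prop :=
  match s with
  | C1 X => X = set0
  | C2 X Y f i => Q2x X Y f i /\ Y = set0
  end.

Definition clang (Q2x : {set Q} -> {set Q} -> (Q -> nat) -> nat -> Prop)
  (post : {set Q} -> {set Q} -> Prop) (w : nat -> Sigma) : Prop :=
  lang_gen (fun s => s = C1 (init A)) (ctrans Q2x post) (cacc Q2x) w.

Definition lang_BS := clang Q2 post_id.
Definition lang_sat_di := clang Q2_di post_str.
Definition lang_sat_de := clang Q2_de post_str.
Definition lang_sat_dide := clang Q2_dide post_str.

End Defs.

(* B_S and the saturated automata are instances of one construction, parameterised by the
   admissible Q_2-states and by the successor macrostate, which lies between delta(S, a) and
   str(delta(S, a)); every such instance accepts exactly the words rejected by A.
   Soundness: along an accepting run of A inside a run of the complement, the ranks settle at an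
   even value v; the breakpoint index cycles through all even values up to the odd rank, so at
   some reset it equals v, and from then on the run of A never leaves the breakpoint, which then
   never empties again.
   Completeness: the Kupferman-Vardi ranks of the run DAG of a rejected word are bounded by 2|Q|,
   non-increasing along edges, even on accepting states and, because Duplicator's answers to a
   path inside a level of the DAG stay inside that level, monotone under delayed simulation.
   So saturating the macrostates does not raise the maximal rank, the resulting ranking passes
   the di and de pruning tests, it is eventually tight, and Koenig's lemma makes the breakpoint
   empty infinitely often. *)

From mathcomp Require Import all_boot.
From mathcomp Require Import boolp.
From Stdlib Require Import Lia.
From mathcomp Require Import zify.
Set Implicit Arguments. Unset Strict Implicit. Unset Printing Implicit Defensive.

Lemma nonincreasing_eventually_const (g : nat -> nat) m :
  (forall k, m <= k -> g k.+1 <= g k) ->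
  exists k1, m <= k1 /\ forall k, k1 <= k -> g k = g k1.
Proof.
move=> gS.
have g_le k1 k : m <= k1 -> k1 <= k -> g k <= g k1.
  move=> mk1 /subnKC <-; elim: (k - k1) => [|d IH]; first by rewrite addn0.
  by rewrite addnS (leq_trans _ IH) // gS // (leq_trans mk1) ?leq_addr.
have attained : exists v, `[< exists2 k, m <= k & g k = v >].
  by exists (g m); apply/asboolP; exists m.
case: (ex_minnP attained) => _ /asboolP[k1 mk1 <-] gmin; exists k1; split => // k k1k.
apply/eqP; rewrite eqn_leq g_le //= gmin //; apply/asboolP.
by exists k => //; apply: leq_trans mk1 k1k.
Qed.

Lemma even_modn_reach a b h : b < h -> exists c, (a.*2 + c.+1.*2) %% h.*2 = b.*2.
Proof.
move=> bh; have h_gt0 : 0 < h by apply: leq_ltn_trans bh.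
exists (b + h - a %% h).-1.
have d_gt0 : 0 < b + h - a %% h by rewrite subn_gt0 (leq_trans (ltn_pmod _ h_gt0)) ?leq_addl.
rewrite prednK // -doubleD -!mul2n -muln_modr; congr (2 * _).
have -> : a + (b + h - a %% h) = (a %/ h).+1 * h + b.
  by have := divn_eq a h; have := ltn_pmod a h_gt0; lia.
by rewrite modnMDl modn_small.
Qed.

Lemma tight_subset (Q : finType) (S S' : {set Q}) (f : Q -> nat) :
  S \subset S' -> tight S f -> tight S' f.
Proof.
move=> /subsetP sub [odd_f [hit zero]]; split => //; split.
  by move=> o oo olt; have [s sS <-] := hit o oo olt; exists s => //; apply: sub.
by move=> q qS'; apply: zero; apply: contra qS'; apply: sub.
Qed.

Lemma finite_uniform_bound (T : finType) (P : T -> nat -> Prop) :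
  (forall x, exists N, P x N) -> (forall x N N', P x N -> N <= N' -> P x N') ->
  exists N, forall x, P x N.
Proof.
move=> bound mono; have [Nf hNf] := fin_all_exists bound.
by exists (\max_x Nf x) => x; apply: mono (hNf x) _; apply: leq_bigmax.
Qed.

Section Automaton.
Variables (Sigma Q : finType) (A : buchi Sigma Q).

Lemma img_mem (X : {set Q}) a p q : p \in X -> q \in delta A p a -> q \in img A X a.
Proof. by move=> pX hq; apply/bigcupP; exists p. Qed.

Lemma img_subset (X Y : {set Q}) a : X \subset Y -> img A X a \subset img A Y a.
Proof.
move=> /subsetP XY; apply/subsetP => q /bigcupP[p pX hq].
by apply: img_mem hq; apply: XY.
Qed.

Lemma some_succ : complete A -> forall q a, {q' | q' \in delta A q a}.
Proof.
move=> complA q a; case: (pickP (mem (delta A q a))) => [q' hq'|none]; first by exists q'.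
by exfalso; have /set0Pn[q' hq'] := complA q a; move: (none q'); rewrite /= hq'.
Qed.

Definition de_winning (sg : Q -> Q -> Sigma -> Q -> Q) q s :=
  forall w ps, spoiler_path A q w ps -> forall i, ps i \in fin A ->
    exists k, i <= k /\ dup sg s w ps k \in fin A.

Lemma de_winning_step sg q s a q' :
  de_winning sg q s -> q' \in delta A q a -> de_winning sg q' (sg s q a q').
Proof.
move=> win hq w ps [ps0 hps] i Fi.
pose w' t := if t is t'.+1 then w t' else a.
pose ps' t := if t is t'.+1 then ps t' else q.
have sp : spoiler_path A q w' ps' by split => // -[|t] /=; [rewrite ps0 | apply: hps].
have dupS t : dup sg s w' ps' t.+1 = dup sg (sg s q a q') w ps t.
  by elim: t => [|t IH] /=; rewrite ?ps0 // -IH.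
have [[|k] [ik Fk]] := win w' ps' sp i.+1 Fi => //.
by exists k; rewrite -dupS.
Qed.

Lemma sim_di_de q s : sim_di A q s -> sim_de A q s.
Proof.
by move=> [sg [hs win]]; exists sg; split => // w ps sp i Fi; exists i; split => //; apply: win.
Qed.

Lemma sim_de_refl q : complete A -> sim_de A q q.
Proof.
move=> complA.
pose sg (r p : Q) a p' := if p' \in delta A r a then p' else sval (some_succ complA r a).
exists sg; split.
  by move=> r p a p' _; rewrite /sg; case: ifP => // _; apply: (svalP (some_succ complA r a)).
move=> w ps [ps0 hps] i Fi; exists i; split => //.
suff -> : dup sg q w ps i = ps i by [].
by elim: i {Fi} => [|i IH] /=; rewrite ?ps0 // IH /sg hps.
Qed.

Definition de_monotone (S : {set Q}) (f : Q -> nat) :=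
  forall p q, p \in S -> q \in S -> sim_de A p q -> f p <= f q.

End Automaton.

(** * The run DAG of a word *)

Section RunDag.
Variables (Sigma Q : finType) (A : buchi Sigma Q) (w : nat -> Sigma).

Definition edge t q q' := q' \in delta A q (w t).

Definition finpath (P : Q -> nat -> Prop) q k e (pi : nat -> Q) :=
  [/\ k <= e, pi k = q, (forall t, k <= t <= e -> P (pi t) t)
    & (forall t, k <= t < e -> edge t (pi t) (pi t.+1))].

Definition infpath (P : Q -> nat -> Prop) q k (pi : nat -> Q) :=
  pi k = q /\ forall t, k <= t -> P (pi t) t /\ edge t (pi t) (pi t.+1).

Definition prepend q k (pi : nat -> Q) t := if t <= k then q else pi t.
Definition splice e (pi1 pi2 : nat -> Q) t := if t <= e then pi1 t else pi2 t.

Lemma finpath_nil P q k : P q k -> finpath P q k k (fun _ => q).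
Proof.
move=> Pq; split => // t /andP[kt tk]; last by move: (leq_ltn_trans kt tk); rewrite ltnn.
by have -> : t = k by apply/eqP; rewrite eqn_leq kt tk.
Qed.

Lemma finpath_cat P q k e e' pi1 pi2 :
  finpath P q k e pi1 -> finpath P (pi1 e) e e' pi2 -> finpath P q k e' (splice e pi1 pi2).
Proof.
case=> ke pi1k P1 E1 [ee' pi2e P2 E2]; split.
- exact: leq_trans ke ee'.
- by rewrite /splice ke.
- move=> t /andP[kt te']; rewrite /splice; case: leqP => te.
    by apply: P1; rewrite kt te.
  by apply: P2; rewrite te' ltnW.
- move=> t /andP[kt te']; rewrite /splice; case: (ltngtP t e) => te.
  + by apply: E1; rewrite kt te.
  + by apply: E2; rewrite te' ltnW.
  + by subst t; rewrite -pi2e; apply: E2; rewrite leqnn.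
Qed.

Lemma finpath_prefix P q k e e' pi : finpath P q k e pi -> k <= e' <= e -> finpath P q k e' pi.
Proof.
case=> ke pik HP HE /andP[ke' e'e]; split => // t /andP[kt te].
  by apply: HP; rewrite kt (leq_trans te e'e).
by apply: HE; rewrite kt (leq_trans te e'e).
Qed.

Lemma finpath_suffix P q k e pi t : finpath P q k e pi -> k <= t <= e -> finpath P (pi t) t e pi.
Proof.
case=> ke pik HP HE /andP[kt te]; split => // s /andP[ts se].
  by apply: HP; rewrite se (leq_trans kt ts).
by apply: HE; rewrite se (leq_trans kt ts).
Qed.

Lemma finpath_last P q k e pi : finpath P q k e pi -> P (pi e) e.
Proof. by case=> ke _ HP _; apply: HP; rewrite ke leqnn. Qed.

Lemma finpath_true P q k e pi : finpath P q k e pi -> finpath (fun _ _ => True) q k e pi.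
Proof. by case=> ke pik _ HE; split. Qed.

Lemma infpath_suffix P q k pi t : infpath P q k pi -> k <= t -> infpath P (pi t) t pi.
Proof. by case=> pik H kt; split => // s ts; apply: H; apply: leq_trans kt ts. Qed.

Lemma infpath_prefix P q k pi e : infpath P q k pi -> k <= e -> finpath P q k e pi.
Proof.
by case=> pik H ke; split => // t /andP[kt _]; [apply: (H t kt).1 | apply: (H t kt).2].
Qed.

Lemma infpath_cat P q k e pi1 pi2 :
  finpath P q k e pi1 -> infpath P (pi1 e) e pi2 -> infpath P q k (splice e pi1 pi2).
Proof.
move=> fp ip; split; first by case: fp => ke pik _ _; rewrite /splice ke.
move=> t kt; pose e' := maxn e.+1 t.+1.
have fp' := finpath_cat fp (infpath_prefix ip (leq_trans (leqnSn e) (leq_maxl _ t.+1))).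
have kte' : k <= t.+1 <= e' by rewrite (leq_trans kt) // leq_maxr.
have [_ _ HP HE] := finpath_prefix fp' kte'.
by split; [apply: HP | apply: HE]; rewrite kt /= ?leqnSn ?ltnSn.
Qed.

Lemma finpath_cons P q k e pi :
  P q k -> edge k q (pi k.+1) -> finpath P (pi k.+1) k.+1 e pi -> finpath P q k e (prepend q k pi).
Proof.
move=> Pq hq [ke _ HP HE]; split; [exact: ltnW | by rewrite /prepend leqnn | |].
- move=> t /andP[kt te]; rewrite /prepend; case: (ltngtP t k) => tk.
  + by move: (leq_ltn_trans kt tk); rewrite ltnn.
  + by apply: HP; rewrite tk te.
  + by subst t.
- move=> t /andP[kt te]; rewrite /prepend; case: (ltngtP t k) => tk.
  + by move: (leq_ltn_trans kt tk); rewrite ltnn.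
  + by apply: HE; rewrite tk te.
  + by subst t.
Qed.

Lemma infpath_cons P q k pi :
  P q k -> edge k q (pi k.+1) -> infpath P (pi k.+1) k.+1 pi -> infpath P q k (prepend q k pi).
Proof.
move=> Pq hq [_ H]; split; first by rewrite /prepend leqnn.
move=> t kt; rewrite /prepend; case: (ltngtP t k) => tk.
- by move: (leq_ltn_trans kt tk); rewrite ltnn.
- exact: H.
- by subst t.
Qed.

(** * Kupferman-Vardi ranks *)

Definition has_infpath P q k := exists pi, infpath P q k pi.
Definition reaches_fin P q k := exists e pi, finpath P q k e pi /\ pi e \in fin A.
Definition accepting_from q k := exists pi, infpath (fun _ _ => True) q k pi /\
  forall N, exists t, N <= t /\ pi t \in fin A.
Definition rejecting q k := ~ accepting_from q k.

(* The levels G_0 >= G_1 >= ... of the run DAG of a rejected word (Kupferman-Vardi):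
   G_(2i+1) keeps the vertices of G_(2i) with infinitely many descendants in G_(2i),
   G_(2i+2) those of G_(2i+1) from which an accepting vertex is reachable inside G_(2i+1). *)
Fixpoint level j : Q -> nat -> Prop :=
  match j with
  | 0 => rejecting
  | j'.+1 => fun q k => level j' q k /\
      (if odd j' then reaches_fin (level j') q k else has_infpath (level j') q k)
  end.

Lemma level_le j j' q k : j <= j' -> level j' q k -> level j q k.
Proof.
elim: j' => [|j' IH]; first by rewrite leqn0 => /eqP ->.
by rewrite leq_eqVlt => /orP[/eqP -> //|]; rewrite ltnS => jj' [/(IH jj')].
Qed.

Lemma level_rejecting j q k : level j q k -> rejecting q k.
Proof. exact: (@level_le 0). Qed.

Lemma level_oddE i q k :
  level (i.*2).+1 q k <-> level i.*2 q k /\ has_infpath (level i.*2) q k.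
Proof. by rewrite /= odd_double. Qed.

Lemma level_evenE i q k :
  level (i.*2).+2 q k <-> level (i.*2).+1 q k /\ reaches_fin (level (i.*2).+1) q k.
Proof. by rewrite /= odd_double. Qed.

Lemma rejecting_succ q q' k : rejecting q k -> edge k q q' -> rejecting q' k.+1.
Proof.
move=> rej hq [pi [ip accF]]; apply: rej; exists (prepend q k pi); split.
  by case: (ip) => pik _; apply: infpath_cons; rewrite ?pik.
move=> N; have [t [Nt Ft]] := accF (maxn N k.+1); exists t; split.
  exact: leq_trans (leq_maxl _ _) Nt.
by rewrite /prepend leqNgt (leq_trans (leq_maxr _ _) Nt).
Qed.

Lemma level_pred j q q' k : rejecting q k -> edge k q q' -> level j q' k.+1 -> level j q k.
Proof.
move=> rej hq; elim: j => [|j IH] //= [Gq' reach]; split; first exact: IH.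
case: (odd j) reach => [[e [pi [fp Fe]]]|[pi ip]].
- have pik : pi k.+1 = q' by case: fp.
  exists e, (prepend q k pi); split; last by case: fp => ke _ _ _; rewrite /prepend leqNgt ke.
  by apply: finpath_cons; rewrite ?pik //; apply: IH.
- have pik : pi k.+1 = q' by case: ip.
  by exists (prepend q k pi); apply: infpath_cons; rewrite ?pik //; apply: IH.
Qed.

Lemma level_fin_even j q k : ~~ odd j -> level j.+1 q k -> q \in fin A -> level j.+2 q k.
Proof.
move=> ej Gq qF; split => //; rewrite /= (negbTE ej) /=.
by exists k, (fun _ => q); split; [apply: finpath_nil; rewrite /= (negbTE ej) in Gq | ].
Qed.

Lemma infpath_level_succ j q k pi :
  ~~ odd j -> infpath (level j) q k pi -> infpath (level j.+1) q k pi.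
Proof.
move=> ej ip; split; first by case: ip.
move=> t kt; have [Gt ht] := ip.2 t kt; split => //; split => //.
by rewrite (negbTE ej); exists pi; apply: infpath_suffix ip kt.
Qed.

Lemma level_odd_infpath j q k : odd j -> level j q k -> has_infpath (level j) q k.
Proof.
case: j => // j /= ej [_]; rewrite (negbTE ej) => -[pi ip].
by exists pi; move: (infpath_level_succ ej ip); rewrite /= (negbTE ej).
Qed.

Definition segment_to (D : Q -> nat -> Prop) u k e pi :=
  [/\ k < e, finpath (fun _ _ => True) u k e pi, D (pi e) e
    & exists2 t, k <= t <= e & pi t \in fin A].

Lemma accepting_of_recurrent (D : Q -> nat -> Prop) :
  (forall u k, D u k -> exists e pi, segment_to D u k e pi) ->
  forall u k, D u k -> accepting_from u k.
Proof.
move=> recur u k Duk.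
have ex_seg (c : Q * nat) :
    exists ep : nat * (nat -> Q), D c.1 c.2 -> segment_to D c.1 c.2 ep.1 ep.2.
  case: (pselect (D c.1 c.2)) => [/recur[e [pi seg_e]]|nD]; first by exists (e, pi).
  by exists (0, fun _ => c.1).
have [seg segP] := choice ex_seg.
pose ch n := iter n (fun c => ((seg c).2 (seg c).1, (seg c).1)) (u, k).
pose T n := (ch n).2.
(* [P n] glues the first [n] segments; [P n'] agrees with [P n] up to [T n] when [n <= n'],
   so [fun t => P t.+1 t] is their limit. *)
pose fix P n := if n is n'.+1 then splice (T n') (P n') (seg (ch n')).2 else fun _ : nat => u.
have chD n : D (ch n).1 (ch n).2.
  by elim: n => [|n IH] //=; have [] := segP _ IH.
have segn n : segment_to D (ch n).1 (T n) (T n.+1) (seg (ch n)).2 := segP _ (chD n).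
have Tinc n : T n < T n.+1 by case: (segn n).
have Tmono : {homo T : n n' / n <= n'} := homo_leq leqnn leq_trans (fun n => ltnW (Tinc n)).
have Tn n : n <= T n by elim: n => [|n IH] //; apply: leq_ltn_trans IH (Tinc n).
have Pn n : finpath (fun _ _ => True) u k (T n) (P n) /\ P n (T n) = (ch n).1.
  elim: n => [|n [fp Pe]]; first by split => //; apply: finpath_nil.
  have [lt_T fp_seg _ _] := segn n; split; last by rewrite /= /splice leqNgt lt_T.
  by apply: finpath_cat fp _; rewrite Pe.
have agree n n' t : n <= n' -> t <= T n -> P n' t = P n t.
  move=> /subnKC <- tT; elim: (n' - n) => [|d IH]; first by rewrite addn0.
  by rewrite addnS /= /splice (leq_trans tT (Tmono _ _ (leq_addr _ _))).
exists (fun t => P t.+1 t); split.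
  split; first by rewrite (agree 0).
  move=> t kt; split => //; rewrite (agree t.+1 t.+2 t.+1) ?Tn //.
  by case: (Pn t.+1) => -[_ _ _ HE] _; apply: HE; rewrite kt /=; apply: Tn.
move=> N; have [_ _ _ [t /andP[Tt tT] Ft]] := segn N.
exists t; split; first exact: leq_trans (Tn N) Tt.
rewrite (agree N.+1) ?ltnS ?(leq_trans (Tn N) Tt) // /= /splice.
case: leqP => [tTN|_ //]; have eT : t = T N by apply/eqP; rewrite eqn_leq tTN Tt.
by have [_ [_ seg0 _ _] _ _] := segn N; rewrite eT (Pn N).2 -seg0 -eT.
Qed.

Lemma reaches_fin_cat P q k e pi :
  finpath P q k e pi -> reaches_fin P (pi e) e -> reaches_fin P q k.
Proof.
move=> fp [e' [pi' [fp' Fe']]]; exists e', (splice e pi pi').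
split; first exact: finpath_cat fp fp'.
rewrite /splice; case: leqP => // e'e; have [ee' pi'e _ _] := fp'.
have ee : e' = e by apply/eqP; rewrite eqn_leq e'e ee'.
by rewrite ee -pi'e -ee.
Qed.

Lemma level_odd_exit i v k : level (i.*2).+1 v k ->
  exists e pi, finpath (level (i.*2).+1) v k e pi /\ ~ level (i.*2).+2 (pi e) e.
Proof.
(* Otherwise every vertex reachable inside G_(2i+1) reaches an accepting vertex inside it,
   and these segments chain into an accepting path. *)
move=> Gv; apply: contrapT => noexit.
have exitP e pi : finpath (level (i.*2).+1) v k e pi -> level (i.*2).+2 (pi e) e.
  by move=> fp; apply: contrapT => nG; apply: noexit; exists e, pi.
pose D u t := exists pi, finpath (level (i.*2).+1) v k t pi /\ pi t = u.
apply: (level_rejecting Gv); apply: (@accepting_of_recurrent D); last first.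
  by exists (fun _ => v); split => //; apply: finpath_nil.
move=> u t [pv [fpv pvt]].
have /level_evenE [_ [e [p [fp Fe]]]] : level (i.*2).+2 u t by rewrite -pvt; apply: exitP.
have /level_oddE [_ [p' ip']] := finpath_last fp.
have ip := infpath_level_succ (negbT (odd_double i)) ip'.
have fseg := finpath_cat fp (infpath_prefix ip (leqnSn e)).
have te : t <= e by case: fp.
exists e.+1, (splice e p p'); split => //.
- exact: finpath_true fseg.
- exists (splice t pv (splice e p p')); split; first by apply: finpath_cat fpv _; rewrite pvt.
  by rewrite /splice leqNgt ltnS te /= ltnn.
- by exists e; rewrite ?te ?leqnSn // /splice leqnn.
Qed.

Lemma level_odd_escape i v k : level (i.*2).+1 v k ->
  exists e pi, [/\ k <= e, infpath (level (i.*2).+1) v k pi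
    & forall t, e <= t -> ~ level (i.*2).+2 (pi t) t].
Proof.
move=> /level_odd_exit [e [p [fp nG]]].
have /level_oddE [_ [p' ip']] := finpath_last fp.
have ip := infpath_level_succ (negbT (odd_double i)) ip'.
have ke : k <= e by case: fp.
exists e, (splice e p p'); split => //; first exact: infpath_cat.
have p'e : p' e = p e by case: ip.
move=> t et; have -> : splice e p p' t = p' t.
  rewrite /splice; case: leqP => // te.
  by have -> : t = e by apply/eqP; rewrite eqn_leq te et.
move=> /level_evenE [_ reach]; apply: nG; apply/level_evenE; split; first exact: finpath_last fp.
exact: (reaches_fin_cat (infpath_prefix ip et) reach).
Qed.

Lemma level_width i : exists l, forall k, l <= k -> #|[set q | `[< level i.*2 q k >]]| <= #|Q| - i.
Proof.
elim: i => [|i [l IH]]; first by exists 0 => k _; rewrite subn0 max_card.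
have [[v [k [lk Gv]]]|none] := pselect (exists v k, l <= k /\ level (i.*2).+1 v k); last first.
  exists l => k lk; apply: leq_trans (_ : 0 <= _) => //; rewrite leqn0 cards_eq0.
  apply/eqP/setP => q; rewrite !inE; apply/asboolP => Gq; apply: none; exists q, k.
  by split => //; apply: level_le Gq; rewrite doubleS.
have [e [pi [ke ip esc]]] := level_odd_escape Gv.
exists e => k' ek'; have kk' := leq_trans ke ek'.
have lt : [set q | `[< level (i.+1).*2 q k' >]] \proper [set q | `[< level i.*2 q k' >]].
  apply/properP; split.
    apply/subsetP => q; rewrite !inE => /asboolP Gq; apply/asboolP.
    by apply: level_le Gq; rewrite doubleS ltnW.
  exists (pi k'); rewrite !inE; last by apply/asboolP; rewrite doubleS; apply: esc.
  by apply/asboolP; apply: (level_le (j' := (i.*2).+1)) => //; apply: (ip.2 k' kk').1.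
have := proper_card lt; have := IH k' (leq_trans lk kk'); lia.
Qed.

Lemma level_bounded q k : ~ level (#|Q|.*2).+1 q k.
Proof.
have [l Hl] := level_width #|Q|.
move/level_oddE => [_ [pi ip]].
have := Hl (maxn l k) (leq_maxl _ _); rewrite subnn leqn0 cards_eq0.
move=> /eqP/setP/(_ (pi (maxn l k))); rewrite !inE => /asboolP; apply.
exact: (ip.2 _ (leq_maxr _ _)).1.
Qed.

Lemma level_index_le j q k : level j q k -> j <= #|Q|.*2.
Proof.
by move=> Gq; rewrite leqNgt; apply/negP => lt; apply: (@level_bounded q k); apply: level_le Gq.
Qed.

Definition vrank q k := \max_(j < (#|Q|.*2).+1 | `[< level j q k >]) j.

Lemma vrankP q k j : rejecting q k -> (level j q k <-> j <= vrank q k).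
Proof.
move=> rej; split.
  move=> Gq; have jlt : j < (#|Q|.*2).+1 by rewrite ltnS; apply: level_index_le Gq.
  apply: (@leq_bigmax_cond _ _ (fun i : 'I_(#|Q|.*2).+1 => nat_of_ord i) (Ordinal jlt)).
  exact/asboolP.
have G0 : `[< level (@ord0 (#|Q|.*2)) q k >] by apply/asboolP.
rewrite /vrank (bigmax_eq_arg _ G0).
by case: arg_maxnP => // i /asboolP Gi _ ji; apply: level_le ji Gi.
Qed.

Lemma vrank_le q k : vrank q k <= #|Q|.*2.
Proof. by apply/bigmax_leqP => i _; rewrite -ltnS. Qed.

Lemma vrank_level q k : rejecting q k -> level (vrank q k) q k.
Proof. by move=> rej; apply/(vrankP _ rej). Qed.

Lemma vrank_edge q q' k : rejecting q k -> edge k q q' -> vrank q' k.+1 <= vrank q k.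
Proof.
move=> rej hq; apply/(vrankP _ rej); apply: (level_pred rej hq).
by apply: vrank_level; apply: rejecting_succ hq.
Qed.

Lemma vrank_fin_even q k : rejecting q k -> q \in fin A -> ~~ odd (vrank q k).
Proof.
move=> rej qF; apply/negP => odd_r.
have [j ej] : exists j, vrank q k = j.+1 by move: odd_r; case: (vrank q k) => // j _; exists j.
have Gq : level j.+1 q k by rewrite -ej; apply: vrank_level.
have even_j : ~~ odd j by rewrite -oddS -ej.
by have /(vrankP _ rej) := level_fin_even even_j Gq qF; rewrite ej ltnn.
Qed.

Lemma vrank_even_finite q k : rejecting q k -> ~~ odd (vrank q k) ->
  level (vrank q k) q k /\ ~ has_infpath (level (vrank q k)) q k.
Proof.
move=> rej even_r; split => [|inf]; first exact: vrank_level.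
have : level (vrank q k).+1 q k by split; [apply: vrank_level | rewrite /= (negbTE even_r)].
by move/(vrankP _ rej); rewrite ltnn.
Qed.

(** * Ranks under delayed simulation *)

Section DuplicatorRun.
Variable sg : Q -> Q -> Sigma -> Q -> Q.
Hypothesis sg_strategy : strategy A sg.

Fixpoint dup_from s k (pi : nat -> Q) t : Q :=
  match t with
  | 0 => s
  | t'.+1 => if t' < k then s else sg (dup_from s k pi t') (pi t') (w t') (pi t'.+1)
  end.

Lemma dup_from_le s k pi t : t <= k -> dup_from s k pi t = s.
Proof. by case: t => //= t ->. Qed.

Lemma dup_from_S s k pi t : k <= t ->
  dup_from s k pi t.+1 = sg (dup_from s k pi t) (pi t) (w t) (pi t.+1).
Proof. by move=> kt /=; rewrite ltnNge kt. Qed.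

Lemma dup_from_shift s k pi t :
  dup_from s k pi (k + t) = dup sg s (fun t => w (k + t)) (fun t => pi (k + t)) t.
Proof.
elim: t => [|t IH]; first by rewrite addn0 dup_from_le.
by rewrite addnS dup_from_S ?leq_addr // IH /= addnS.
Qed.

Section Play.
Variables (q s : Q) (k : nat) (pi : nat -> Q).
Hypothesis win : de_winning A sg q s.
Hypothesis pi_k : pi k = q.
Hypothesis pi_edge : forall t, k <= t -> edge t (pi t) (pi t.+1).

Lemma dup_from_play t : k <= t ->
  de_winning A sg (pi t) (dup_from s k pi t) /\ edge t (dup_from s k pi t) (dup_from s k pi t.+1).
Proof.
move=> /subnKC <-; elim: (t - k) => [|d [win_d _]].
  rewrite addn0 dup_from_S // dup_from_le // pi_k; split => //.
  by apply: sg_strategy; rewrite -pi_k; apply: pi_edge.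
have kd : k <= k + d := leq_addr d k.
split; first by rewrite addnS dup_from_S //; apply: de_winning_step win_d (pi_edge kd).
by rewrite !addnS !dup_from_S ?(leq_trans kd) //; apply: sg_strategy; apply: pi_edge; rewrite ltnW.
Qed.

Lemma dup_from_rejecting t : rejecting s k -> k <= t -> rejecting (dup_from s k pi t) t.
Proof.
move=> rej /subnKC <-; elim: (t - k) => [|d IH]; first by rewrite addn0 dup_from_le.
by rewrite addnS; apply: rejecting_succ IH (dup_from_play (leq_addr _ _)).2.
Qed.

Lemma dup_from_fin e : k <= e -> pi e \in fin A ->
  exists e', e <= e' /\ dup_from s k pi e' \in fin A.
Proof.
move=> ke Fe.
have sp : spoiler_path A q (fun t => w (k + t)) (fun t => pi (k + t)).
  by split; rewrite ?addn0 // => t; rewrite addnS; apply: pi_edge; apply: leq_addr.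
have Fe_shift : pi (k + (e - k)) \in fin A by rewrite subnKC.
have [e' [le Fe']] := win sp Fe_shift.
by exists (k + e'); rewrite dup_from_shift -{1}(subnKC ke) leq_add2l.
Qed.

End Play.

Lemma dup_from_infpath (P P' : Q -> nat -> Prop) q s k pi :
  (forall q' s' t, de_winning A sg q' s' -> rejecting s' t -> P q' t -> P' s' t) ->
  de_winning A sg q s -> rejecting s k -> infpath P q k pi -> infpath P' s k (dup_from s k pi).
Proof.
move=> transfer win rej [pi_k ip].
have pi_edge t : k <= t -> edge t (pi t) (pi t.+1) by move=> kt; apply: (ip t kt).2.
split; first exact: dup_from_le.
move=> t kt; have [win_t edge_t] := dup_from_play win pi_k pi_edge kt.
by split => //; apply: transfer win_t (dup_from_rejecting win pi_k pi_edge rej kt) (ip t kt).1.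
Qed.

End DuplicatorRun.

Lemma level_sim j sg q s k : strategy A sg -> de_winning A sg q s ->
  rejecting s k -> level j q k -> level j s k.
Proof.
move=> strat; elim: j q s k => [|j IH] q s k win rej //= [Gq reach].
split; first exact: IH win rej Gq.
have transfer q' s' t : de_winning A sg q' s' -> rejecting s' t -> level j q' t -> level j s' t.
  by move=> win' rej'; apply: IH win' rej'.
case: (boolP (odd j)) reach => oj; rewrite ?oj ?(negbTE oj).
  move=> [e [p [fp Fe]]]; have ke : k <= e by case: fp.
  have [p' ip'] := level_odd_infpath oj (finpath_last fp).
  have ip := infpath_cat fp ip'.
  have Fe_spliced : splice e p p' e \in fin A by rewrite /splice leqnn.
  have [e' [ee' Fe']] := dup_from_fin win ip.1 (fun t kt => (ip.2 t kt).2) ke Fe_spliced.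
  exists e', (dup_from sg s k (splice e p p')); split => //.
  exact: infpath_prefix (dup_from_infpath strat transfer win rej ip) (leq_trans ke ee').
by move=> [p ip]; exists (dup_from sg s k p); apply: (dup_from_infpath strat transfer win rej ip).
Qed.

Lemma rejecting_sim q s k : sim_de A q s -> rejecting s k -> rejecting q k.
Proof.
move=> [sg [strat win]] rej [pi [[pi_k ip] accF]]; apply: rej.
have pi_edge t : k <= t -> edge t (pi t) (pi t.+1) by move=> kt; apply: (ip t kt).2.
exists (dup_from sg s k pi); split.
  split; first exact: dup_from_le.
  by move=> t kt; split => //; apply: (dup_from_play strat win pi_k pi_edge kt).2.
move=> N; have [t [Nt Ft]] := accF (maxn N k).
have [e' [te' Fe']] := dup_from_fin win pi_k pi_edge (leq_trans (leq_maxr _ _) Nt) Ft.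
by exists e'; split => //; apply: leq_trans (leq_maxl _ _) (leq_trans Nt te').
Qed.

Lemma vrank_sim q s k : sim_de A q s -> rejecting s k -> vrank q k <= vrank s k.
Proof.
move=> sim rej; have [sg [strat win]] := sim.
apply/(vrankP _ rej); apply: (level_sim strat win rej).
by apply: vrank_level; apply: rejecting_sim sim rej.
Qed.

(** * Koenig's lemma *)

Lemma infpath_of_succ (P : Q -> nat -> Prop) q k :
  (forall u t, P u t -> exists2 u', edge t u u' & P u' t.+1) -> P q k -> has_infpath P q k.
Proof.
move=> succ Pq.
have ex_nx (c : Q * nat) : exists u', P c.1 c.2 -> edge c.2 c.1 u' /\ P u' c.2.+1.
  case: (pselect (P c.1 c.2)) => [/succ[u' e Pu']|nP]; first by exists u'.
  by exists q.
have [nx nxP] := choice ex_nx.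
pose fix pf t := if t is t'.+1 then (if t' < k then q else nx (pf t', t')) else q.
have pf_le t : t <= k -> pf t = q by case: t => //= t ->.
have pfS t : k <= t -> pf t.+1 = nx (pf t, t) by move=> kt /=; rewrite ltnNge kt.
have inv t : k <= t -> P (pf t) t.
  move=> /subnKC <-; elim: (t - k) => [|d IH]; first by rewrite addn0 pf_le.
  by rewrite addnS pfS ?leq_addr //; apply: (nxP (_, _) IH).2.
exists pf; split; first exact: pf_le.
by move=> t kt; split; [apply: inv | rewrite pfS //; apply: (nxP (_, _) (inv t kt)).1].
Qed.

Lemma finpath_extend P q k e pi : complete A -> finpath P q k e pi ->
  exists pi', infpath (fun _ _ => True) q k pi' /\ forall t, t <= e -> pi' t = pi t.
Proof.
move=> complA fp.
have [pi2 ip2] : has_infpath (fun _ _ => True) (pi e) e.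
  apply: infpath_of_succ => // u t _.
  by have [u' hu'] := some_succ complA u (w t); exists u'.
exists (splice e pi pi2); split; first exact: infpath_cat (finpath_true fp) ip2.
by move=> t te; rewrite /splice te.
Qed.

Definition paths_shorter P q k N := ~ exists pi, finpath P q k (k + N) pi.

Lemma paths_shorter_mono P q k N N' :
  paths_shorter P q k N -> N <= N' -> paths_shorter P q k N'.
Proof.
move=> short NN' [pi fp]; apply: short; exists pi.
by apply: finpath_prefix fp _; rewrite leq_addr leq_add2l.
Qed.

Lemma paths_shorter_pred P p y k N :
  P p k -> edge k p y -> paths_shorter P p k N.+1 -> paths_shorter P y k.+1 N.
Proof.
move=> Pp py short [pi fp]; apply: short; exists (prepend p k pi).
have pi_k1 : pi k.+1 = y by case: fp.
by rewrite addnS -addSn; apply: finpath_cons; rewrite ?pi_k1.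
Qed.

Lemma paths_shorter_succ P u t (Nf : Q -> nat) :
  (forall u', edge t u u' -> paths_shorter P u' t.+1 (Nf u')) ->
  paths_shorter P u t (\max_u' Nf u').+1.
Proof.
move=> short [pi fp]; have [_ pi_t _ HE] := fp.
have tt1 : t <= t.+1 <= t + (\max_u' Nf u').+1 by rewrite leqnSn addnS ltnS leq_addr.
have edge_t : edge t u (pi t.+1) by rewrite -pi_t; apply: HE; rewrite leqnn addnS ltnS leq_addr.
apply: (short _ edge_t); exists pi; apply: finpath_prefix (finpath_suffix fp tt1) _.
by rewrite leq_addr /= addSn addnS ltnS leq_add2l; apply: leq_bigmax.
Qed.

Lemma koenig P q k : ~ has_infpath P q k -> exists N, paths_shorter P q k N.
Proof.
move=> no_inf; apply: contrapT => unbounded.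
pose long u t := forall N, ~ paths_shorter P u t N.
suff [pi [pi_k ip]] : has_infpath long q k.
  apply: no_inf; exists pi; split => // t kt; split; last exact: (ip t kt).2.
  have /contrapT[pi' fp] := (ip t kt).1 0; rewrite addn0 in fp.
  by case: (fp) (finpath_last fp) => _ ->.
apply: infpath_of_succ => [u t long_u|N short]; last by apply: unbounded; exists N.
apply: contrapT => no_succ.
have bound u' : exists N, edge t u u' -> paths_shorter P u' t.+1 N.
  case: (boolP (edge t u u')) => e; last by exists 0.
  apply: contrapT => unbounded'; apply: no_succ; exists u' => // N short.
  by apply: unbounded'; exists N.
have [Nf hNf] := fin_all_exists bound.
exact: long_u _ (paths_shorter_succ hNf).
Qed.

Lemma paths_shorter_sim j x y k N : complete A -> sim_de A x y -> rejecting y k ->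
  paths_shorter (level j) y k N -> paths_shorter (level j) x k N.
Proof.
move=> complA [sg [strat win]] rej short [pi fp].
have [pi' [[pi'_k ip'] pi'E]] := finpath_extend complA fp.
have pi'_edge t : k <= t -> edge t (pi' t) (pi' t.+1) by move=> kt; apply: (ip' t kt).2.
apply: short; exists (dup_from sg y k pi'); have [kN _ HP _] := fp; split => //.
- exact: dup_from_le.
- move=> t /andP[kt tN]; have [win_t _] := dup_from_play strat win pi'_k pi'_edge kt.
  apply: (level_sim strat win_t (dup_from_rejecting strat win pi'_k pi'_edge rej kt)).
  by rewrite pi'E //; apply: HP; rewrite kt tN.
- by move=> t /andP[kt _]; apply: (dup_from_play strat win pi'_k pi'_edge kt).2.
Qed.

Lemma level_not_persistent j (X : nat -> {set Q}) k0 : complete A ->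
  (forall k x, k0 <= k -> x \in X k -> level j x k /\ ~ has_infpath (level j) x k) ->
  (forall k x, k0 <= k -> x \in X k.+1 ->
     exists p y, [/\ p \in X k, edge k p y, sim_de A x y & rejecting y k.+1]) ->
  (forall k, k0 <= k -> X k != set0) -> False.
Proof.
move=> complA finite pred nonempty.
have [N bounded] : exists N, forall x, x \in X k0 -> paths_shorter (level j) x k0 N.
  apply: finite_uniform_bound => [x|x N N' short NN' xX]; last first.
    exact: paths_shorter_mono (short xX) NN'.
  case: (boolP (x \in X k0)) => xX; last by exists 0.
  by have [N short] := koenig (finite k0 x (leqnn _) xX).2; exists N.
have shrink d : d <= N -> forall x, x \in X (k0 + d) -> paths_shorter (level j) x (k0 + d) (N - d).
  elim: d => [|d IH] dN x; first by rewrite addn0 subn0; apply: bounded.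
  rewrite addnS => xX; have kd := leq_addr d k0.
  have [p [y [pX py sxy rej]]] := pred _ _ kd xX.
  apply: (paths_shorter_sim complA sxy rej); apply: (paths_shorter_pred (finite _ _ kd pX).1 py).
  by rewrite subnSK //; apply: IH (ltnW dN) p pX.
have [x xX] := set0Pn _ (nonempty _ (leq_addr N k0)).
apply: (shrink N (leqnn N) x xX); rewrite subnn addn0.
by exists (fun _ => x); apply: finpath_nil; apply: (finite _ _ (leq_addr N k0) xX).1.
Qed.

(** * Soundness *)

Section Soundness.
Variable Q2x : {set Q} -> {set Q} -> (Q -> nat) -> nat -> Prop.
Variable post : {set Q} -> {set Q} -> Prop.
Hypothesis Q2x_sub : forall S O f i, Q2x S O f i -> Q2 A S O f i.
Hypothesis post_sup : forall T S', post T S' -> T \subset S'.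

Section Breakpoints.
Variables (S O : nat -> {set Q}) (f : nat -> Q -> nat) (i : nat -> nat) (m : nat).
Hypothesis step : forall k, m <= k ->
  ctrans A Q2x post (C2 (S k) (O k) (f k) (i k)) (w k) (C2 (S k.+1) (O k.+1) (f k.+1) (i k.+1)).
Hypothesis O_empty_often : forall N, exists k, N <= k /\ O k = set0.

Lemma run_stepP k : m <= k -> [/\ Q2 A (S k.+1) (O k.+1) (f k.+1) (i k.+1),
    (forall q q', q \in S k -> q' \in delta A q (w k) -> f k.+1 q' <= f k q),
    rank (f k) = rank (f k.+1)
  & (O k = set0 /\ i k.+1 = (i k + 2) %% (rank (f k.+1) + 1)
        /\ O k.+1 = [set q in S k.+1 | f k.+1 q == i k.+1])
    \/ (O k != set0 /\ i k.+1 = i k /\ O k.+1 = img A (O k) (w k) :&: [set q | f k.+1 q == i k])].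
Proof. by move=> mk; have [/Q2x_sub Q2k [_ [dec [rk [_ upd]]]]] := step mk. Qed.

Lemma rank_constant k : m <= k -> rank (f k) = rank (f m).
Proof.
move=> /subnKC <-; elim: (k - m) => [|d IH]; first by rewrite addn0.
by rewrite addnS; have [_ _ <- _] := run_stepP (leq_addr d m).
Qed.

Lemma rank_odd : odd (rank (f m)).
Proof. by have [[[_ [odd_r _]] _] _ -> _] := run_stepP (leqnn m). Qed.

Lemma index_even k : m < k -> ~~ odd (i k).
Proof. by case: k => // k mk; have [[_ [_ [even_i _]]] _ _ _] := run_stepP mk. Qed.

Lemma index_stable k e : m <= k -> k <= e -> (forall t, k <= t < e -> O t != set0) -> i e = i k.
Proof.
move=> mk /subnKC <-; elim: (e - k) => [|d IH] nonempty; first by rewrite addn0.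
have kd := leq_addr d k.
rewrite addnS -IH => [|t /andP[kt td]]; last by apply: nonempty; rewrite kt ltnW // addnS ltnS.
have [_ _ _ [[O0 _]|[_ [-> _]]]] := run_stepP (leq_trans mk kd) => //.
by move: (nonempty (k + d)); rewrite kd addnS ltnSn O0 eqxx => /(_ isT).
Qed.

Lemma next_reset k : m <= k ->
  exists e, [/\ k <= e, O e = set0 & i e.+1 = (i k + 2) %% (rank (f m) + 1)].
Proof.
move=> mk; have ex_reset : exists e, (k <= e) && (O e == set0).
  by have [e [ke Oe]] := O_empty_often k; exists e; rewrite ke Oe eqxx.
case: (ex_minnP ex_reset) => e /andP[ke /eqP Oe] first_reset; exists e; split => //.
have ie : i e = i k.
  apply: index_stable => // t /andP[kt te]; apply/negP => /eqP Ot.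
  by move: (first_reset t); rewrite kt Ot eqxx leqNgt te => /(_ isT).
have me := leq_trans mk ke.
have [_ _ rk_e [[_ [-> _]]|[nonempty _]]] := run_stepP me; last by rewrite Oe eqxx in nonempty.
by rewrite ie -rk_e rank_constant.
Qed.

Lemma reset_reaches c k : m <= k ->
  exists e, [/\ k <= e, O e = set0 & i e.+1 = (i k + c.+1.*2) %% (rank (f m) + 1)].
Proof.
elim: c k => [|c IH] k mk; first exact: next_reset.
have [e [ke _ ie]] := IH k mk.
have [e' [ee' Oe' ie']] := next_reset (leq_trans mk (leq_trans ke (leqnSn e))).
exists e'; split => //; first exact: leq_trans ke (ltnW ee').
by rewrite ie' ie modnDml -addnA addn2 -doubleS.
Qed.

Variable r : nat -> Q.
Hypothesis run_in : forall k, m <= k -> r k \in S k.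
Hypothesis run_edge : forall k, edge k (r k) (r k.+1).
Hypothesis run_fin : forall N, exists k, N <= k /\ r k \in fin A.

Lemma run_rank_nonincreasing k : m <= k -> f k.+1 (r k.+1) <= f k (r k).
Proof. by move=> mk; have [_ dec _ _] := run_stepP mk; apply: dec (run_in mk) (run_edge k). Qed.

Lemma breakpoint_traps k1 v e : m <= k1 -> (forall k, k1 <= k -> f k (r k) = v) ->
  k1 <= e -> O e = set0 -> i e.+1 = v -> forall j, e < j -> r j \in O j /\ i j = v.
Proof.
move=> mk1 const k1e Oe ie j /subnKC <-; have me := leq_trans mk1 k1e.
elim: (j - e.+1) => [|d [rO iv]].
  rewrite addn0; have [_ _ _ [[_ [_ ->]]|[nonempty _]]] := run_stepP me.
    by rewrite ie inE run_in ?const ?eqxx ?(leqW me) ?(leqW k1e).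
  by rewrite Oe eqxx in nonempty.
have med : m <= e.+1 + d by lia.
rewrite addnS; have [_ _ _ [[O0 _]|[_ [-> ->]]]] := run_stepP med; first by rewrite O0 inE in rO.
rewrite !inE iv (img_mem rO (run_edge _)) const ?eqxx //; lia.
Qed.

Lemma breakpoints_exclude_accepting_run : False.
Proof.
have [k1 [mk1 const]] := nonincreasing_eventually_const run_rank_nonincreasing.
set v := f k1 (r k1) in const.
have [t [k1t Ft]] := run_fin k1.+1.
have mt := leq_trans mk1 (ltnW k1t).
have [[[_ even_F] _] _] : Q2 A (S t) (O t) (f t) (i t).
  by case: t k1t Ft mt => // t k1t _ mt; have [] := run_stepP (leq_trans mk1 k1t).
have even_v : ~~ odd v by rewrite -(const t (ltnW k1t)); apply: even_F.
have [b vb] : exists b, v = b.*2 by exists v./2; rewrite -{1}(odd_double_half v) (negbTE even_v).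
have [a ia] : exists a, i k1.+1 = a.*2.
  have even_i := index_even (leq_ltn_trans mk1 (ltnSn k1)).
  by exists (i k1.+1)./2; rewrite -{1}(odd_double_half (i k1.+1)) (negbTE even_i).
have [h rh] : exists h, rank (f m) + 1 = h.*2.
  by exists (rank (f m) + 1)./2; rewrite -{1}(odd_double_half (rank (f m) + 1)) addn1 /= rank_odd.
have bh : b < h.
  rewrite -ltn_double -vb -rh addn1 ltnS -(const t (ltnW k1t)) -(rank_constant mt).
  exact: leq_bigmax.
have [c hc] := even_modn_reach a bh.
have [e [k1e Oe ie]] := reset_reaches c (leq_trans mk1 (leqnSn k1)).
rewrite ia rh hc -vb in ie.
have [j [ej Oj]] := O_empty_often e.+1.
by have [+ _] := breakpoint_traps mk1 const (ltnW k1e) Oe ie ej; rewrite Oj inE.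
Qed.

End Breakpoints.

Definition macro_of (c : cstate Q) := match c with C1 X => X | C2 X _ _ _ => X end.
Definition breakpoint_of (c : cstate Q) := match c with C1 _ => set0 | C2 _ Y _ _ => Y end.
Definition ranking_of (c : cstate Q) := match c with C1 _ => fun _ => 0 | C2 _ _ f _ => f end.
Definition index_of (c : cstate Q) := match c with C1 _ => 0 | C2 _ _ _ i => i end.
Definition is_C2 (c : cstate Q) := if c is C2 _ _ _ _ then true else false.

Lemma ctrans_macro c a c' p q :
  ctrans A Q2x post c a c' -> p \in macro_of c -> q \in delta A p a -> q \in macro_of c'.
Proof.
move=> tr pc pq; have := img_mem pc pq; apply/subsetP.
case: c c' tr {pc} => [X|X Y f i] [X'|X' Y' f' i'] //=; first exact: post_sup.
  by case=> _ [/post_sup].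
by case=> _ [/post_sup].
Qed.

Lemma clang_rejects : clang A Q2x post w -> ~ lang A w.
Proof.
move=> [rho [rho0 [rho_tr rho_acc]]] [r [r0 [r_tr r_fin]]].
have r_in k : r k \in macro_of (rho k).
  by elim: k => [|k IH]; [rewrite rho0 | apply: ctrans_macro (rho_tr k) IH (r_tr k)].
have [m [_ acc_m]] := rho_acc 0.
have C2_from k : m <= k -> is_C2 (rho k).
  move=> /subnKC <-; elim: (k - m) => [|d IH].
    by move: acc_m (r_in m); rewrite addn0; case: (rho m) => //= X ->; rewrite inE.
  by move: (rho_tr (m + d)) IH; rewrite addnS; case: (rho (m + d)); case: (rho (m + d).+1).
pose S k := macro_of (rho k); pose O k := breakpoint_of (rho k).
pose f k := ranking_of (rho k); pose i k := index_of (rho k).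
have rhoE k : m <= k -> rho k = C2 (S k) (O k) (f k) (i k).
  by move/C2_from; rewrite /S /O /f /i; case: (rho k).
apply: (@breakpoints_exclude_accepting_run S O f i m _ _ r _ r_tr r_fin) => [k mk|N|k mk].
- by rewrite -(rhoE _ mk) -(rhoE _ (leqW mk)).
- have [k [Nk acc_k]] := rho_acc (maxn N m).
  exists k; split; first exact: leq_trans (leq_maxl _ _) Nk.
  by move: acc_k; rewrite (rhoE k (leq_trans (leq_maxr _ _) Nk)) => -[].
- exact: r_in.
Qed.

End Soundness.

(** * Completeness *)

Section Completeness.
Variable Q2x : {set Q} -> {set Q} -> (Q -> nat) -> nat -> Prop.
Variable post : {set Q} -> {set Q} -> Prop.
Variable postf : {set Q} -> {set Q}.
Hypothesis complA : complete A.
Hypothesis Q2x_of_monotone : forall S O f i, Q2 A S O f i -> de_monotone A S f -> Q2x S O f i.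
Hypothesis post_postf : forall T, post T (postf T).
Hypothesis postf_sup : forall T : {set Q}, T \subset postf T.
Hypothesis postf_sim : forall (T : {set Q}) x, x \in postf T -> exists2 y, y \in T & sim_de A x y.
Hypothesis rejected : ~ lang A w.

Fixpoint macro k := if k is k'.+1 then postf (img A (macro k') (w k')) else init A.
Definition rank_at k q := if q \in macro k then vrank q k else 0.
Definition max_rank k := rank (rank_at k).

Lemma macro_succ k p q : p \in macro k -> edge k p q -> q \in macro k.+1.
Proof. by move=> pS pq; apply: (subsetP (postf_sup _)); apply: img_mem pS pq. Qed.

Lemma macro_pred k x : x \in macro k.+1 ->
  exists p y, [/\ p \in macro k, edge k p y, sim_de A x y & y \in macro k.+1].
Proof.
move=> /postf_sim[y /bigcupP[p pS py] sxy]; exists p, y; split => //.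
exact: macro_succ pS py.
Qed.

Lemma macro_rejecting k q : q \in macro k -> rejecting q k.
Proof.
elim: k q => [|k IH] q.
  move=> q0 [pi [[pi0 ip] accF]]; apply: rejected; exists pi; split; first by rewrite pi0.
  by split => // t; apply: (ip t (leq0n t)).2.
move=> /macro_pred[p [y [pS py sxy yS]]].
by apply: rejecting_sim sxy _; apply: rejecting_succ py; apply: IH.
Qed.

Lemma macro_infpath P x k pi : x \in macro k -> infpath P x k pi ->
  forall t, k <= t -> pi t \in macro t.
Proof.
move=> xS [pi_k ip] t /subnKC <-; elim: (t - k) => [|d IH]; first by rewrite addn0 pi_k.
by rewrite addnS; apply: macro_succ IH (ip _ (leq_addr d k)).2.
Qed.

Lemma rank_atE k q : q \in macro k -> rank_at k q = vrank q k.
Proof. by rewrite /rank_at => ->. Qed.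

Lemma rank_at_le k q : rank_at k q <= max_rank k.
Proof. exact: leq_bigmax. Qed.

Lemma max_rank_le k : max_rank k <= #|Q|.*2.
Proof. by apply/bigmax_leqP => q _; rewrite /rank_at; case: ifP => // _; apply: vrank_le. Qed.

Lemma max_rank_nonincreasing k : max_rank k.+1 <= max_rank k.
Proof.
apply/bigmax_leqP => x _; rewrite /rank_at; case: ifP => // xS.
have [p [y [pS py sxy yS]]] := macro_pred xS.
apply: leq_trans (vrank_sim sxy (macro_rejecting yS)) _.
apply: leq_trans (vrank_edge (macro_rejecting pS) py) _.
by rewrite -rank_atE // rank_at_le.
Qed.

Lemma max_rank_attained k : macro k != set0 -> exists2 x, x \in macro k & vrank x k = max_rank k.
Proof.
case/set0Pn => x xS; have Q_gt0 : 0 < #|Q| by apply/card_gt0P; exists x.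
have [q0 eq0] := eq_bigmax (rank_at k) Q_gt0.
case: (boolP (q0 \in macro k)) => q0S; first by exists q0; rewrite // /max_rank /rank eq0 rank_atE.
exists x => //; apply/eqP; rewrite eqn_leq -{1}(rank_atE xS) rank_at_le /=.
by rewrite /max_rank /rank eq0 /rank_at (negbTE q0S).
Qed.

Lemma clang_of_empty_macro k0 : macro k0 = set0 -> clang A Q2x post w.
Proof.
move=> S0; have empty k : k0 <= k -> macro k = set0.
  move=> /subnKC <-; elim: (k - k0) => [|d IH]; first by rewrite addn0.
  apply/setP => x; rewrite addnS inE; apply/negP => /macro_pred[p [y [pS _ _ _]]].
  by rewrite IH inE in pS.
exists (fun k => C1 (macro k)); split => //; split => [k|N]; first exact: post_postf.
by exists (maxn N k0); split; [apply: leq_maxl | apply: empty; apply: leq_maxr].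
Qed.

Section StableMaxRank.
Variable k1 : nat.
Hypothesis macro_nonempty : forall k, macro k != set0.
Hypothesis max_rank_stable : forall k, k1 <= k -> max_rank k = max_rank k1.
Local Notation m := (max_rank k1).

Lemma max_rank_odd : odd m.
Proof.
apply: contraT => even_m; exfalso.
pose X k := [set x in macro k | vrank x k == m].
apply: (@level_not_persistent m X k1 complA) => [k x k1k|k x k1k|k k1k].
- rewrite inE => /andP[xS /eqP rx]; rewrite -rx.
  by apply: vrank_even_finite (macro_rejecting xS) _; rewrite rx.
- rewrite inE => /andP[xS /eqP rx]; have [p [y [pS py sxy yS]]] := macro_pred xS.
  exists p, y; split => //; last exact: macro_rejecting yS.
  have rp : vrank p k <= m by rewrite -(max_rank_stable k1k) -rank_atE // rank_at_le.
  rewrite inE pS eqn_leq rp -{1}rx /=.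
  exact: leq_trans (vrank_sim sxy (macro_rejecting yS)) (vrank_edge (macro_rejecting pS) py).
- have [x xS rx] := max_rank_attained (macro_nonempty k); apply/set0Pn; exists x.
  by rewrite inE xS rx max_rank_stable ?eqxx.
Qed.

Lemma odd_rank_persists o : odd o -> o < m ->
  exists l, forall k, l <= k -> exists2 x, x \in macro k & vrank x k = o.
Proof.
move=> odd_o lt_om; have eo : o = (o./2).*2.+1 by rewrite -{1}(odd_double_half o) odd_o.
have [x xS rx] := max_rank_attained (macro_nonempty k1).
have Gx : level (o./2).*2.+1 x k1 by apply/(vrankP _ (macro_rejecting xS)); rewrite rx -eo ltnW.
have [e [pi [k1e ip esc]]] := level_odd_escape Gx.
exists e => k ek; have k1k := leq_trans k1e ek.
have piS := macro_infpath xS ip k1k; have rej := macro_rejecting piS.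
exists (pi k) => //; apply/eqP; rewrite eqn_leq; apply/andP; split.
  by rewrite leqNgt; apply/negP => lt; apply: (esc k ek); apply/(vrankP _ rej); rewrite -eo.
by apply/(vrankP _ rej); rewrite eo; apply: (ip.2 k k1k).1.
Qed.

Lemma macro_tight_eventually : exists L, forall k, L <= k -> tight (macro k) (rank_at k).
Proof.
have ex_l o : exists l,
    odd o -> o < m -> forall k, l <= k -> exists2 x, x \in macro k & vrank x k = o.
  case: (boolP (odd o && (o < m))) => [/andP[oo om]|no]; last first.
    by exists 0 => oo om; rewrite oo om in no.
  by have [l hl] := odd_rank_persists oo om; exists l.
have [lf hlf] := choice ex_l.
exists (maxn k1 (\max_(o < m) lf o)) => k Lk; have k1k := leq_trans (leq_maxl _ _) Lk.
have rk : rank (rank_at k) = m := max_rank_stable k1k.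
split; first by rewrite rk max_rank_odd.
split => [o odd_o|q qS]; last by rewrite /rank_at (negbTE qS).
rewrite rk leq_eqVlt => /orP[/eqP ->|om].
  by have [x xS rx] := max_rank_attained (macro_nonempty k); exists x; rewrite ?rank_atE // rx.
have lf_le : lf o <= k.
  apply: leq_trans (leq_trans (leq_maxr k1 _) Lk).
  exact: (@leq_bigmax _ (fun i : 'I_m => lf i) (Ordinal om)).
by have [x xS rx] := hlf o odd_o om k lf_le; exists x; rewrite ?rank_atE.
Qed.

End StableMaxRank.

Section BreakpointRun.
Variables (m k0 : nat).
Hypothesis k0_gt0 : 0 < k0.
Hypothesis max_rank_from : forall k, k0 <= k -> max_rank k = m.
Hypothesis tight_from : forall k, k0 <= k -> tight (macro k) (rank_at k).

Definition breakpoint_step k (c : {set Q} * nat) :=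
  if c.1 == set0 then
    let i := (c.2 + 2) %% (m + 1) in ([set q in macro k.+1 | rank_at k.+1 q == i], i)
  else (img A c.1 (w k) :&: [set q | rank_at k.+1 q == c.2], c.2).

(* The components (O, i) of the constructed run, which enters Q_2 at time [k0]. *)
Fixpoint breakpoint k :=
  if k is k'.+1 then (if k' < k0 then (set0, 0) else breakpoint_step k' (breakpoint k'))
  else (set0, 0).

Lemma breakpoint_le k : k <= k0 -> breakpoint k = (set0, 0).
Proof. by case: k => //= k ->. Qed.

Lemma breakpointS k : k0 <= k -> breakpoint k.+1 = breakpoint_step k (breakpoint k).
Proof. by move=> k0k /=; rewrite ltnNge k0k. Qed.

Lemma stable_rank_odd : odd m.
Proof. by have [] := tight_from (leqnn k0); rewrite -/(max_rank k0) max_rank_from. Qed.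

Lemma breakpoint_inv k : k0 <= k ->
  [/\ ~~ odd (breakpoint k).2, (breakpoint k).2 <= m, (breakpoint k).1 \subset macro k
  & forall q, q \in (breakpoint k).1 -> rank_at k q = (breakpoint k).2].
Proof.
move=> /subnKC <-; elim: (k - k0) => [|d [even_i i_le sub rk]].
  by rewrite addn0 breakpoint_le //= sub0set; split => // q; rewrite inE.
rewrite addnS breakpointS ?leq_addr // /breakpoint_step; case: ifP => _ /=; split => //.
- by rewrite odd_mod ?addn1 /= ?stable_rank_odd // addn2 /= negbK.
- by rewrite -ltnS -(addn1 m) ltn_pmod // addn1.
- by apply/subsetP => q; rewrite inE => /andP[].
- by move=> q; rewrite inE => /andP[_ /eqP].
- apply/subsetP => q; rewrite inE => /andP[qi _]; apply: (subsetP (postf_sup _)).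
  exact: (subsetP (img_subset A _ sub) _ qi).
- by move=> q; rewrite !inE => /andP[_ /eqP].
Qed.

Lemma breakpoint_Q2x k : k0 <= k -> Q2x (macro k) (breakpoint k).1 (rank_at k) (breakpoint k).2.
Proof.
move=> k0k; have [even_i i_le sub rk] := breakpoint_inv k0k; have tightk := tight_from k0k.
apply: Q2x_of_monotone => [|p q pS qS spq]; last first.
  by rewrite !rank_atE //; apply: vrank_sim spq (macro_rejecting qS).
have ranking_k : ranking A (rank_at k).
  split => q; first by rewrite /nQ mul2n /rank_at; case: ifP => // _; apply: vrank_le.
  by move=> qF; rewrite /rank_at; case: ifP => // qS; apply: vrank_fin_even (macro_rejecting qS) qF.
have i_bound : (breakpoint k).2 + 2 <= 2 * nQ Q.
  have := max_rank_le k; rewrite max_rank_from // /nQ.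
  have := odd_double_half m; have := odd_double_half (breakpoint k).2.
  rewrite stable_rank_odd (negbTE even_i) -!mul2n; lia.
by split; [split; [|apply: tight_subset (subsetT _) tightk] | split; [|split; [|split; [|split]]]].
Qed.

Definition complement_run k :=
  if k < k0 then C1 (macro k) else C2 (macro k) (breakpoint k).1 (rank_at k) (breakpoint k).2.

Lemma complement_run_trans k : ctrans A Q2x post (complement_run k) (w k) (complement_run k.+1).
Proof.
rewrite /complement_run; case: (ltnP k.+1 k0) => [lt|k0k1].
  by rewrite (ltn_trans (ltnSn k) lt); apply: post_postf.
have Q2k1 := breakpoint_Q2x k0k1; have tight_k1 := tight_from k0k1.
case: (ltnP k k0) => [lt|k0k] /=.
  by move: Q2k1; rewrite /= lt => Q2k1; split => //; split => //; apply: post_postf.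
split => //; split; first exact: post_postf.
split=> [q q' qS qq'|].
  by rewrite !rank_atE ?(macro_succ qS qq') //; apply: vrank_edge (macro_rejecting qS) qq'.
have rk k' : k0 <= k' -> rank (rank_at k') = m by apply: max_rank_from.
rewrite !rk ?(leqW k0k) // ltnNge k0k /= /breakpoint_step; split => //; split => //.
by case: eqP => [O0|/eqP nonempty]; [left | right].
Qed.

Lemma breakpoint_empty_often N : exists k, N <= k /\ (breakpoint k).1 = set0.
Proof.
apply: contrapT => never; set N' := maxn N k0; have k0N' : k0 <= N' := leq_maxr _ _.
have nonempty k : N' <= k -> (breakpoint k).1 != set0.
  move=> N'k; apply/negP => /eqP empty; apply: never; exists k.
  by split => //; apply: leq_trans (leq_maxl _ _) N'k.
have index_const k : N' <= k -> (breakpoint k).2 = (breakpoint N').2.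
  move=> /subnKC <-; elim: (k - N') => [|d IH]; first by rewrite addn0.
  rewrite addnS breakpointS ?(leq_trans k0N') ?leq_addr // /breakpoint_step.
  by rewrite (negbTE (nonempty _ (leq_addr _ _))).
have [even_iv _ _ _] := breakpoint_inv k0N'.
apply: (@level_not_persistent (breakpoint N').2 (fun k => (breakpoint k).1) N' complA).
- move=> k x N'k xO; have [_ _ sub rk] := breakpoint_inv (leq_trans k0N' N'k).
  have xS := subsetP sub x xO.
  have rx : vrank x k = (breakpoint N').2 by rewrite -rank_atE // rk // index_const.
  by rewrite -rx; apply: vrank_even_finite (macro_rejecting xS) _; rewrite rx.
- move=> k x N'k; rewrite breakpointS ?(leq_trans k0N' N'k) // /breakpoint_step.
  rewrite (negbTE (nonempty _ N'k)) !inE => /andP[/bigcupP[p pO px] _].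
  have [_ _ sub _] := breakpoint_inv (leq_trans k0N' N'k).
  have xS := macro_succ (subsetP sub p pO) px.
  by exists p, x; split => //; [apply: sim_de_refl | apply: macro_rejecting xS].
- exact: nonempty.
Qed.

Lemma clang_of_breakpoints : clang A Q2x post w.
Proof.
exists complement_run; split; first by rewrite /complement_run k0_gt0.
split=> [|N]; first exact: complement_run_trans.
have [k [Nk O0]] := breakpoint_empty_often (maxn N k0); have k0k := leq_trans (leq_maxr _ _) Nk.
exists k; split; first exact: leq_trans (leq_maxl _ _) Nk.
by rewrite /complement_run ltnNge k0k /=; split => //; apply: breakpoint_Q2x.
Qed.

End BreakpointRun.

Lemma clang_of_rejected : clang A Q2x post w.
Proof.
have [[k0 /eqP S0]|nonempty] := pselect (exists k, macro k == set0).
  exact: clang_of_empty_macro S0.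
have {}nonempty k : macro k != set0 by apply/negP => S0; apply: nonempty; exists k.
have [k1 [_ stable]] :=
  nonincreasing_eventually_const (m := 0) (fun k _ => max_rank_nonincreasing k).
have [L tightL] := macro_tight_eventually nonempty stable.
apply: (@clang_of_breakpoints (max_rank k1) (maxn (maxn k1 L) 1)) => [|k k0k|k k0k].
- by rewrite leq_max orbT.
- by apply: stable; apply: leq_trans k0k; rewrite !leq_max leqnn.
- by apply: tightL; apply: leq_trans k0k; rewrite !leq_max leqnn orbT.
Qed.

End Completeness.

End RunDag.

Section Complement.
Variables (Sigma Q : finType) (A : buchi Sigma Q).
Hypothesis complA : complete A.

Lemma clang_iff_rejected (Q2x : {set Q} -> {set Q} -> (Q -> nat) -> nat -> Prop)
    (post : {set Q} -> {set Q} -> Prop) (postf : {set Q} -> {set Q}) :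
  (forall S O f i, Q2x S O f i -> Q2 A S O f i) ->
  (forall S O f i, Q2 A S O f i -> de_monotone A S f -> Q2x S O f i) ->
  (forall T S', post T S' -> T \subset S') ->
  (forall T, post T (postf T)) -> (forall T : {set Q}, T \subset postf T) ->
  (forall (T : {set Q}) x, x \in postf T -> exists2 y, y \in T & sim_de A x y) ->
  forall w, clang A Q2x post w <-> ~ lang A w.
Proof.
move=> Q2x_sub Q2x_mono post_sup post_postf postf_sup postf_sim w.
by split; [apply: clang_rejects | apply: clang_of_rejected].
Qed.

Lemma lang_BS_iff_rejected w : lang_BS A w <-> ~ lang A w.
Proof.
apply: (@clang_iff_rejected _ _ id) => // [T S' -> //|T x xT].
by exists x => //; apply: sim_de_refl.
Qed.

Definition str (T : {set Q}) := [set q | `[< exists2 s, s \in T & sim_de A q s >]].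

Lemma sat_iff_rejected (Q2x : {set Q} -> {set Q} -> (Q -> nat) -> nat -> Prop) :
  (forall S O f i, Q2x S O f i -> Q2 A S O f i) ->
  (forall S O f i, Q2 A S O f i -> de_monotone A S f -> Q2x S O f i) ->
  forall w, clang A Q2x (post_str A) w <-> ~ lang A w.
Proof.
move=> Q2x_sub Q2x_mono; apply: (@clang_iff_rejected _ _ str) => //.
- move=> T S' str_S'; apply/subsetP => q qT; apply/str_S'.
  by exists q => //; apply: sim_de_refl.
- by move=> T q; rewrite inE; split => /asboolP.
- move=> T; apply/subsetP => q qT; rewrite inE; apply/asboolP.
  by exists q => //; apply: sim_de_refl.
- by move=> T x; rewrite inE => /asboolP.
Qed.

Lemma Q2_di_of_monotone S O f i : Q2 A S O f i -> de_monotone A S f -> Q2_di A S O f i.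
Proof.
move=> Q2S mono; split => // -[p [q [pS qS sim lt]]].
by move: (mono p q pS qS (sim_di_de sim)); rewrite leqNgt lt.
Qed.

Lemma Q2_de_of_monotone S O f i : Q2 A S O f i -> de_monotone A S f -> Q2_de A S O f i.
Proof.
move=> Q2S mono; split => // -[p [q [pS qS sim lt]]].
have ceil_ge : f q <= ceil_even (f q) by rewrite /ceil_even; case: ifP.
by move: (leq_trans (mono p q pS qS sim) ceil_ge); rewrite leqNgt lt.
Qed.

End Complement.

Theorem lemma9 (Sigma Q : finType) (A : buchi Sigma Q) :
  0 < #|Sigma| -> complete A ->
  (forall w, lang_sat_di A w <-> lang_BS A w) /\
  (forall w, lang_sat_de A w <-> lang_BS A w) /\
  (forall w, lang_sat_dide A w <-> lang_BS A w).
Proof.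
move=> _ complA; split; [|split] => w; rewrite lang_BS_iff_rejected //.
all: apply: sat_iff_rejected => //.
- by move=> S O f i [].
- exact: Q2_di_of_monotone.
- by move=> S O f i [].
- exact: Q2_de_of_monotone.
- by move=> S O f i [[]].
- by move=> S O f i Q2S mono; split; [apply: Q2_di_of_monotone | apply: Q2_de_of_monotone].
Qed.
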